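(* Let $\lambda,\mu$ be integral partitions with $\lambda\neq\mu$, and suppose $\|\lambda\|_p=\|\mu\|_p$ for some real $p$ with $1<p<\infty$. Then $\lambda^{\times n}\not\hookrightarrow\mu^{\times n}$ for every positive integer $n$.
   Context: An integral partition is a finite nonincreasing sequence of positive integers (equality means equality as multisets of entries). For $p\in[1,\infty)$, $\|\lambda\|_p=(\sum_i\lambda_i^p)^{1/p}$. The product $\lambda\times\mu$ of $\lambda=[\lambda_1,\ldots,\lambda_m]$ and $\mu=[\mu_1,\ldots,\mu_n]$ is the partition whose entries are all products $\lambda_i\mu_j$ ($1\le i\le m$, $1\le j\le n$), reordered nonincreasingly; $\lambda^{\times n}$ is the $n$-fold product $\lambda\times\cdots\times\lambda$. $\lambda$ embeds into $\mu$, written $\lambda\hookrightarrow\mu$, if there is a map $\varphi:\{1,\ldots,m\}\to\{1,\ldots,n\}$ with $\sum_{i\in\varphi^{-1}(j)}\lambda_i\le\mu_j$ for all $j$. *)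

From Stdlib Require Import Reals.
From mathcomp Require Import all_boot.
Set Implicit Arguments. Unset Strict Implicit. Unset Printing Implicit Defensive.

Definition is_partition (l : seq nat) : bool :=
  all (fun x => 0 < x) l && sorted geq l.

(* Rpower x y = exp (y * ln x) is only meaningful for x > 0; the sum is
   positive unless l is empty, whose norm is 0. *)
Definition pnorm (p : R) (l : seq nat) : R :=
  if l is [::] then R0 else Rpower (foldr (fun x acc => Rplus (Rpower (INR x) p) acc) R0 l) (Rinv p).

Definition pprod (l m : seq nat) : seq nat :=
  sort geq [seq x * y | x <- l, y <- m].

(* n-fold product l^{x n} (used for n >= 1; l^{x 1} = pprod l [::1] = l for a partition). *)
Definition ppow (l : seq nat) (n : nat) : seq nat := iter n (pprod l) [:: 1].

Definition embeds (l m : seq nat) : Prop :=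
  exists phi : 'I_(size l) -> 'I_(size m),
    forall j : 'I_(size m), \sum_(i < size l | phi i == j) nth 0 l i <= nth 0 m j.

(* Since [x |-> x ^ p] is strictly superadditive for [p > 1], under an
   embedding [l -> m] the p-th powers of the entries of [l] sent to an entry
   [y] of [m] sum to at most [y ^ p], with equality only when exactly one
   entry, equal to [y], is sent there.  The p-th power sums are multiplicative
   under the product of partitions, so those of [lam^n] and [mu^n] agree; hence
   an embedding [lam^n -> mu^n] would make [lam^n] a rearrangement of [mu^n].
   The integral power sums of a multiset of naturals determine it, and those of
   [lam^n] are the n-th powers of those of [lam], so [lam] would be a
   rearrangement of [mu], hence equal to it as both are sorted. *)

From Stdlib Require Import Reals Lra.
From HB Require Import structures.
From mathcomp Require Import all_boot zify.

Set Implicit Arguments.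
Unset Strict Implicit.

Lemma sorted_geq_perm_eq (s t : seq nat) :
  sorted geq s -> sorted geq t -> perm_eq s t -> s = t.
Proof.
apply: sorted_eq => [x y z xy yz | x y xy]; first exact: leq_trans yz xy.
by apply: anti_leq; rewrite andbC.
Qed.

Lemma all_pos_pprod (l m : seq nat) :
  all (fun x => 0 < x) l -> all (fun x => 0 < x) m -> all (fun x => 0 < x) (pprod l m).
Proof.
move=> /allP l_pos /allP m_pos; rewrite /pprod all_sort.
by apply/allP => _ /allpairsP[[x y] /= [xl ym ->]]; rewrite muln_gt0 l_pos ?m_pos.
Qed.

Lemma all_pos_ppow (l : seq nat) n :
  all (fun x => 0 < x) l -> all (fun x => 0 < x) (ppow l n).
Proof. by move=> l_pos; elim: n => //= n; apply: all_pos_pprod. Qed.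

Lemma big_pprod (R : Type) (zero : R) (times : Monoid.mul_law zero)
    (plus : Monoid.add_law zero times) (g : nat -> R) (l m : seq nat) :
  {in l & m, forall x y, g (x * y) = times (g x) (g y)} ->
  \big[plus/zero]_(z <- pprod l m) g z =
    times (\big[plus/zero]_(x <- l) g x) (\big[plus/zero]_(y <- m) g y).
Proof.
move=> gM; rewrite /pprod (perm_big _ (permEl (perm_sort _ _))).
rewrite big_allpairs_dep big_distrlr; apply: eq_big_seq => x xl.
by apply: eq_big_seq => y ym; apply: gM.
Qed.

Section Fibers.

Variables (l m : seq nat) (phi : 'I_(size l) -> 'I_(size m)).

Definition fiber (j : 'I_(size m)) : seq 'I_(size l) :=
  [seq i <- index_enum 'I_(size l) | phi i == j].

Lemma big_fibers (R : Type) (idx : R) (op : Monoid.com_law idx) (G : nat -> R) :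
  \big[op/idx]_(x <- l) G x =
    \big[op/idx]_(j < size m) \big[op/idx]_(i <- fiber j) G (nth 0 l i).
Proof.
rewrite (big_nth 0) big_mkord (partition_big phi xpredT) //.
by apply: eq_bigr => j _; rewrite big_filter.
Qed.

Lemma perm_eq_singleton_fibers :
  (forall j, exists2 i, fiber j = [:: i] & nth 0 l i = nth 0 m j) -> perm_eq l m.
Proof.
move=> fiber1; apply/permP => a; rewrite -!sumn_count !sumnE !big_map.
rewrite big_fibers (big_nth 0 (r := m)) big_mkord; apply: eq_bigr => j _.
by have [i -> <-] := fiber1 j; rewrite big_seq1.
Qed.

End Fibers.

Definition power_sum (t : nat) (s : seq nat) : nat := \sum_(x <- s) x ^ t.

Lemma power_sum_ppow t (l : seq nat) n : power_sum t (ppow l n) = power_sum t l ^ n.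
Proof.
elim: n => [|n IHn]; first by rewrite /power_sum big_seq1 exp1n.
rewrite expnS -IHn /= /power_sum big_pprod // => x y _ _; exact: expnMn.
Qed.

Lemma bernoulli_expn a t : a ^ t * (a + t) <= a * (a + 1) ^ t.
Proof.
elim: t => [|t IHt]; first by rewrite !expn0; lia.
rewrite !expnS [X in _ <= X]mulnCA.
apply: leq_trans (leq_mul (leqnn (a + 1)) IHt); nia.
Qed.

(* Bernoulli with [a = M - 1], [t = N * M], then divide by [M]. *)
Lemma expn_pred_lt N M : 0 < M -> N * (M - 1) ^ (N * M) < M ^ (N * M).
Proof.
move=> M_gt0; rewrite -(ltn_pmul2r M_gt0) [X in _ < X]mulnC.
have := bernoulli_expn (M - 1) (N * M); rewrite subnK //.
have : (M - 1) * M ^ (N * M) < M * M ^ (N * M) by rewrite ltn_pmul2r ?expn_gt0 ?M_gt0; lia.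
nia.
Qed.

Lemma expn_muln_gt0 N M : 0 < M ^ (N * M).
Proof. by rewrite expn_gt0 muln_eq0 lt0n orbCA orNb orbT. Qed.

Lemma power_sum_lt_expn N M s :
  size s <= N -> {in s, forall x, x < M} -> power_sum (N * M) s < M ^ (N * M).
Proof.
case: s => [|x s] size_s lt_M.
  by rewrite /power_sum big_nil expn_muln_gt0.
have M_gt0 : 0 < M := leq_ltn_trans (leq0n x) (lt_M x (mem_head x s)).
have t_gt0 : 0 < N * M by rewrite muln_gt0 M_gt0 andbT (leq_trans _ size_s).
apply: leq_ltn_trans _ (@expn_pred_lt N M M_gt0).
rewrite /power_sum; apply: leq_trans (leq_mul size_s (leqnn _)).
rewrite -sum1_size big_distrl /= !big_seq leq_sum // => y y_in.
by rewrite mul1n leq_exp2r //; have := lt_M y y_in; lia.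
Qed.

Lemma filter_pred1 (x : nat) s : filter (pred1 x) s = nseq (count_mem x s) x.
Proof. by elim: s => //= y s ->; case: eqP => [->|]. Qed.

Lemma power_sum_count_mem t M s :
  power_sum t s = count_mem M s * M ^ t + power_sum t (filter (predC1 M) s).
Proof.
rewrite /power_sum (bigID (pred1 M)) /= big_filter; congr (_ + _).
by rewrite (eq_bigr (fun=> M ^ t)) => [|x /eqP ->]; rewrite // big_const_seq iter_addn_0 mulnC.
Qed.

(* Induction on a strict bound [B.+1] of the entries: the multiplicity of [B]
   is the quotient of the [t]-th power sum by [B ^ t], once [t] is so large
   that the smaller entries contribute less than [B ^ t]. *)
Lemma perm_eq_power_sum (l m : seq nat) :
  (forall t, power_sum t l = power_sum t m) -> perm_eq l m.
Proof.
have [B] : exists B, {in l, forall x, x < B} /\ {in m, forall x, x < B}.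
  exists (\max_(x <- l ++ m) x.+1).
  by split=> x x_in; apply: (leq_bigmax_seq x); rewrite // mem_cat x_in ?orbT.
elim: B l m => [|B IHB] l m [lt_l lt_m] eq_ps.
  have nil_lt0 s : {in s, forall x, x < 0} -> s = [::].
    by case: s => // x s /(_ x (mem_head x s)).
  by rewrite (nil_lt0 l lt_l) (nil_lt0 m lt_m).
have lt_filter s :
    {in s, forall x, x < B.+1} -> {in filter (predC1 B) s, forall x, x < B}.
  move=> lt_s x; rewrite mem_filter => /andP[/= neB x_in].
  by have := lt_s x x_in; rewrite ltnS leq_eqVlt (negPf neB).
pose t := (size l + size m) * B.
have ps_lt s : size s <= size l + size m -> {in s, forall x, x < B.+1} ->
    power_sum t (filter (predC1 B) s) < B ^ t.
  move=> size_s lt_s; apply: power_sum_lt_expn (lt_filter s lt_s).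
  by rewrite size_filter (leq_trans (count_size _ _)).
have eq_count : count_mem B l = count_mem B m.
  have := eq_ps t; rewrite (power_sum_count_mem t B l) (power_sum_count_mem t B m).
  move=> /(congr1 (divn^~ (B ^ t))); rewrite !divnMDl ?expn_muln_gt0 //.
  rewrite (divn_small (ps_lt l (leq_addr _ _) lt_l)).
  by rewrite (divn_small (ps_lt m (leq_addl _ _) lt_m)) !addn0.
have eq_ps' u : power_sum u (filter (predC1 B) l) = power_sum u (filter (predC1 B) m).
  have := eq_ps u; rewrite (power_sum_count_mem u B l) (power_sum_count_mem u B m).
  by rewrite eq_count => /addnI.
rewrite -(perm_filterC (pred1 B) l) perm_sym -(perm_filterC (pred1 B) m) perm_sym.
by rewrite !filter_pred1 eq_count perm_cat2l IHB //; split; apply: lt_filter.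
Qed.

Lemma perm_eq_ppow (l m : seq nat) n :
  0 < n -> perm_eq (ppow l n) (ppow m n) -> perm_eq l m.
Proof.
move=> n_gt0 perm_pow; apply: perm_eq_power_sum => t.
by apply: (expIn n_gt0); rewrite -!power_sum_ppow /power_sum (perm_big _ perm_pow).
Qed.

Open Scope R_scope.

Lemma Rplus_associative : associative Rplus.
Proof. by move=> x y z; rewrite Rplus_assoc. Qed.

HB.instance Definition _ := Monoid.isComLaw.Build R 0 Rplus Rplus_associative Rplus_comm Rplus_0_l.
HB.instance Definition _ := Monoid.isMulLaw.Build R 0 Rmult Rmult_0_l Rmult_0_r.
HB.instance Definition _ := Monoid.isAddLaw.Build R Rmult Rplus Rmult_plus_distr_r Rmult_plus_distr_l.

Definition rpow (p : R) (x : nat) : R := Rpower (INR x) p.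

Definition rpower_sum (p : R) (s : seq nat) : R := \big[Rplus/0]_(x <- s) rpow p x.

Lemma INR_gt0 (x : nat) : (0 < x)%N -> 0 < INR x.
Proof. by move=> x_gt0; apply: lt_0_INR; apply/ltP. Qed.

Lemma rpow_gt0 p x : 0 < rpow p x.
Proof. exact: exp_pos. Qed.

Lemma rpowM p (x y : nat) : (0 < x)%N -> (0 < y)%N -> rpow p (x * y) = rpow p x * rpow p y.
Proof.
by move=> x_gt0 y_gt0; rewrite /rpow mult_INR Rpower_mult_distr //; exact: INR_gt0.
Qed.

Lemma rpower_sum_ppow p (l : seq nat) n :
  all (fun x => (0 < x)%N) l -> rpower_sum p (ppow l n) = rpower_sum p l ^ n.
Proof.
move=> /[dup] /allP l_pos l_all; elim: n => [|n IHn].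
  by rewrite /rpower_sum big_seq1 /rpow /Rpower ln_1 Rmult_0_r exp_0.
rewrite /= -IHn /rpower_sum big_pprod // => x y x_in y_in.
by apply: rpowM; [exact: l_pos | exact: (allP (all_pos_ppow n l_all))].
Qed.

Lemma rpow_lt p (x y : nat) : 0 < p -> (0 < x)%N -> (x < y)%N -> rpow p x < rpow p y.
Proof.
move=> p_gt0 x_gt0 lt_xy; apply: Rlt_Rpower_l => //; split; first exact: INR_gt0.
by apply: lt_INR; apply/ltP.
Qed.

Lemma rpow_le p (x y : nat) : 0 < p -> (0 < x)%N -> (x <= y)%N -> rpow p x <= rpow p y.
Proof.
move=> p_gt0 x_gt0; rewrite leq_eqVlt => /orP[/eqP -> | lt_xy]; first exact: Rle_refl.
exact/Rlt_le/rpow_lt.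
Qed.

(* [t |-> t ^ (p - 1)] is increasing, so [a ^ p = a * a ^ (p - 1) < a * (a + b) ^ (p - 1)]. *)
Lemma Rpower_add_lt p a b : 1 < p -> 0 < a -> 0 < b ->
  Rpower a p + Rpower b p < Rpower (a + b) p.
Proof.
move=> p_gt1 a_gt0 b_gt0.
have split_pow c : 0 < c -> Rpower c p = c * Rpower c (p - 1).
  by move=> c_gt0; rewrite -{2}(Rpower_1 c c_gt0) -Rpower_plus; congr Rpower; ring.
rewrite (split_pow a) // (split_pow b) // (split_pow (a + b)); last lra.
have a_lt : Rpower a (p - 1) < Rpower (a + b) (p - 1) by apply: Rlt_Rpower_l; lra.
have b_lt : Rpower b (p - 1) < Rpower (a + b) (p - 1) by apply: Rlt_Rpower_l; lra.
nra.
Qed.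

Lemma rpow_addn_lt p (x y : nat) : 1 < p -> (0 < x)%N -> (0 < y)%N ->
  rpow p x + rpow p y < rpow p (x + y).
Proof.
by move=> p_gt1 x_gt0 y_gt0; rewrite /rpow plus_INR; apply: Rpower_add_lt => //; exact: INR_gt0.
Qed.

Lemma Rle_big (I : Type) (r : seq I) (P : pred I) (a b : I -> R) :
  (forall i, P i -> a i <= b i) ->
  \big[Rplus/0]_(i <- r | P i) a i <= \big[Rplus/0]_(i <- r | P i) b i.
Proof.
move=> le_ab; apply: big_ind2 => //; first exact: Rle_refl.
by move=> *; apply: Rplus_le_compat.
Qed.

Lemma Rle_big_eq (I : finType) (a b : I -> R) :
  (forall i, a i <= b i) -> \big[Rplus/0]_i a i = \big[Rplus/0]_i b i -> a =1 b.
Proof.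
move=> le_ab eq_sum i; move: eq_sum; rewrite (bigD1 i) // [X in _ = X](bigD1 i) //=.
have := @Rle_big _ (index_enum I) (fun j => j != i) _ _ (fun j _ => le_ab j).
have := le_ab i; lra.
Qed.

Section Superadditivity.

Variable p : R.
Hypothesis p_gt1 : 1 < p.

Lemma rpow_big_lt (I : Type) (F : I -> nat) (i j : I) (r : seq I) :
  (forall k, 0 < F k)%N ->
  \big[Rplus/0]_(k <- i :: j :: r) rpow p (F k) < rpow p (\sum_(k <- i :: j :: r) F k).
Proof.
move=> F_pos; elim: r i j => [|k r IHr] i j.
  by rewrite !big_cons !big_nil Rplus_0_r addn0; apply: rpow_addn_lt.
have sum_gt0 : (0 < \sum_(k' <- j :: k :: r) F k')%N by rewrite big_cons ltn_addr.
have := IHr j k; have := rpow_addn_lt p_gt1 (F_pos i) sum_gt0.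
rewrite !big_cons; lra.
Qed.

Lemma rpow_fiber (I : Type) (F : I -> nat) (r : seq I) (y : nat) :
  (forall i, 0 < F i)%N -> (0 < y)%N -> (\sum_(i <- r) F i <= y)%N ->
  \big[Rplus/0]_(i <- r) rpow p (F i) <= rpow p y /\
  (\big[Rplus/0]_(i <- r) rpow p (F i) = rpow p y -> exists2 i, r = [:: i] & F i = y).
Proof.
have p_gt0 : 0 < p by lra.
move=> F_pos y_gt0; case: r => [|i [|j r]] le_y.
- by rewrite big_nil; have := rpow_gt0 p y; split=> [|?]; lra.
- rewrite big_seq1 in le_y; rewrite big_seq1.
  split=> [|eq_pow]; first exact: rpow_le p_gt0 (F_pos i) le_y.
  exists i => //; apply/eqP; rewrite eqn_leq le_y leqNgt; apply/negP => lt_y.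
  by have := rpow_lt p_gt0 (F_pos i) lt_y; lra.
- have sum_gt0 : (0 < \sum_(k <- i :: j :: r) F k)%N by rewrite big_cons ltn_addr.
  have := rpow_big_lt i j r F_pos; have := rpow_le p_gt0 sum_gt0 le_y.
  by split=> [|?]; lra.
Qed.

(* Summing [rpow_fiber] over the fibers of the embedding, equality of the
   totals forces every fiber to be a single entry of the same size. *)
Lemma embeds_perm_eq (l m : seq nat) :
  all (fun x => 0 < x)%N l -> all (fun x => 0 < x)%N m -> embeds l m ->
  rpower_sum p l = rpower_sum p m -> perm_eq l m.
Proof.
move=> /allP l_pos /allP m_pos [phi phi_le] eq_sum.
have fiber_le j : (\sum_(i <- fiber phi j) nth 0 l i <= nth 0 m j)%N.
  by rewrite big_filter; exact: phi_le.
have fiber_bound (j : 'I_(size m)) :=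
  @rpow_fiber _ (fun i : 'I_(size l) => nth 0%N l i) (fiber phi j) (nth 0%N m j)
    (fun i => l_pos _ (mem_nth 0%N (ltn_ord i))) (m_pos _ (mem_nth 0%N (ltn_ord j)))
    (fiber_le j).
apply: (perm_eq_singleton_fibers (phi := phi)) => j; apply: (fiber_bound j).2.
apply: (Rle_big_eq (fun j => (fiber_bound j).1)).
by rewrite /rpower_sum (big_fibers phi) (big_nth 0%N (r := m)) big_mkord in eq_sum.
Qed.

End Superadditivity.

Lemma rpower_sum_gt0 p (s : seq nat) : s != [::] -> 0 < rpower_sum p s.
Proof.
case: s => // x s _; rewrite /rpower_sum big_cons.
have : 0 <= \big[Rplus/0]_(y <- s) rpow p y.
  apply: big_ind => [|u v|y _]; [exact: Rle_refl | lra | exact/Rlt_le/rpow_gt0].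
by have := rpow_gt0 p x; lra.
Qed.

Lemma pnormE p (s : seq nat) :
  pnorm p s = if s is [::] then 0 else Rpower (rpower_sum p s) (/ p).
Proof. by case: s => //= x s; rewrite /rpower_sum unlock. Qed.

Lemma pnorm_eq_rpower_sum p (l m : seq nat) :
  0 < p -> pnorm p l = pnorm p m -> rpower_sum p l = rpower_sum p m.
Proof.
move=> p_gt0; rewrite !pnormE.
have root_inj (s t : seq nat) : s != [::] -> t != [::] ->
    Rpower (rpower_sum p s) (/ p) = Rpower (rpower_sum p t) (/ p) ->
    rpower_sum p s = rpower_sum p t.
  move=> s_nil t_nil /(f_equal (Rpower^~ p)); rewrite !Rpower_mult Rinv_l; last lra.
  by rewrite !Rpower_1 //; apply: rpower_sum_gt0.
case: l => [|x l]; case: m => [|y m] //; try exact: root_inj.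
- by have := exp_pos (/ p * ln (rpower_sum p (y :: m))); rewrite /Rpower; lra.
- by have := exp_pos (/ p * ln (rpower_sum p (x :: l))); rewrite /Rpower; lra.
Qed.

Close Scope R_scope.

Theorem corollary2p2 (lam mu : seq nat) (p : R) :
  is_partition lam -> is_partition mu -> lam <> mu ->
  Rlt 1 p -> pnorm p lam = pnorm p mu ->
  forall n : nat, 0 < n -> ~ embeds (ppow lam n) (ppow mu n).
Proof.
move=> /andP[lam_pos lam_sorted] /andP[mu_pos mu_sorted] lam_neq_mu p_gt1 eq_norm n n_gt0 emb.
apply: lam_neq_mu; apply: sorted_geq_perm_eq lam_sorted mu_sorted _.
apply: (perm_eq_ppow n_gt0); apply: (embeds_perm_eq p_gt1 _ _ emb); rewrite ?all_pos_ppow //.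
by rewrite !rpower_sum_ppow // (pnorm_eq_rpower_sum _ eq_norm) //; lra.
Qed.
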